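(* Let $F$ be a countable subfield of $\mathbb{R}$, let $\mathcal R=\langle R,<,+,-,\times\rangle$ be an ordered real closed field containing $F$ as a subfield with the order of $\mathcal R$ agreeing with that of $F$, and let $h$ be an $F$-bijection of $\mathcal R$. Then the structure $h^{-1}[\mathcal R]$ is a model of $T[F]^*$.
   Context: An $F$-bijection of $\mathcal R$ is a map $h:R\to R$ that is an order-preserving bijection with $h(0)=0$, $h(1)=1$ and $h(ax)=ah(x)$ for all $x\in R$, $a\in F$. $h^{-1}[\mathcal R]$ is the structure with domain $R$ in which $0,1,+,<$ are interpreted as in $\mathcal R$, each $c_a$ ($a\in F$) is interpreted as $a$, and $\times$ is interpreted as $x\otimes y=h^{-1}(h(x)h(y))$. $T[F]^*$ is the theory in the language $\{0,1,+,\times,<\}\cup\{c_a:a\in F\}$ with axioms: (1) $0,+,<$ form an ordered abelian group; (2) the positive elements form a divisible ordered abelian group under $\times$ with identity $1$ and order $<$; (3a) $c_{a+b}=c_a+c_b$, (3b) $c_{ab}=c_a\times c_b$, (3c) $0<c_a$ for $a>0$; (4a) $c_{a+b}\times x=(c_a\times x)+(c_b\times x)$, (4b) $c_a\times(x+y)=(c_a\times x)+(c_a\times y)$, for all $a,b\in F$ and all $x,y$. *)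

(* R is an rcfType (ordered real closed field); the ambient
   real line containing F is an abstract realType Re (unique up to iso). *)
From HB Require Import structures.
From mathcomp Require Import all_boot all_order all_algebra.
From mathcomp Require Import reals.
Set Implicit Arguments. Unset Strict Implicit. Unset Printing Implicit Defensive.
Import Order.TTheory GRing.Theory Num.Theory.
Local Open Scope ring_scope.

Definition is_subfield (Re : realType) (F : {pred Re}) : Prop :=
  [/\ 0 \in F, 1 \in F,
      {in F &, forall a b, a - b \in F},
      {in F &, forall a b, a * b \in F} &
      {in F, forall a, a^-1 \in F}].

Definition countable_pred (T : Type) (F : {pred T}) : Prop :=
  exists f : T -> nat, {in F &, injective f}.

Definition order_field_embedding (Re : realType) (R : rcfType)
    (F : {pred Re}) (iota : Re -> R) : Prop :=
  [/\ iota 1 = 1,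
      {in F &, forall a b, iota (a + b) = iota a + iota b},
      {in F &, forall a b, iota (a * b) = iota a * iota b} &
      {in F &, forall a b, (a < b) = (iota a < iota b)}].

Definition F_bijection (Re : realType) (R : rcfType)
    (F : {pred Re}) (iota : Re -> R) (h : R -> R) : Prop :=
  [/\ bijective h, {homo h : x y / x < y}, h 0 = 0, h 1 = 1 &
      forall a x, a \in F -> h (iota a * x) = iota a * h x].

Fixpoint mpow (T : Type) (mul : T -> T -> T) (x : T) (n : nat) : T :=
  match n with
  | 0 => x
  | n'.+1 => mul (mpow mul x n') x
  end.
(* mpow mul x n = x^(n+1) *)

Definition models_TFstar (Re : realType) (F : {pred Re}) (T : Type)
    (zero one : T) (add mul : T -> T -> T) (lt : T -> T -> Prop) (c : Re -> T)
    : Prop :=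
  ((forall x y z, add x (add y z) = add (add x y) z) /\
      (forall x y, add x y = add y x) /\
      (forall x, add zero x = x) /\
      (forall x, exists y, add x y = zero) /\
      (forall x, ~ lt x x) /\
      (forall x y z, lt x y -> lt y z -> lt x z) /\
      (forall x y, lt x y \/ x = y \/ lt y x) /\
      (forall x y z, lt x y -> lt (add x z) (add y z)))
  /\
  ((forall x y, lt zero x -> lt zero y -> lt zero (mul x y)) /\
      (forall x y z, lt zero x -> lt zero y -> lt zero z ->
          mul x (mul y z) = mul (mul x y) z) /\
      (forall x y, lt zero x -> lt zero y -> mul x y = mul y x) /\
      lt zero one /\
      (forall x, lt zero x -> mul one x = x) /\
      (forall x, lt zero x -> exists y, lt zero y /\ mul x y = one) /\
      (forall x y z, lt zero x -> lt zero y -> lt zero z -> lt x y ->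
          lt (mul x z) (mul y z)) /\
      (forall x (n : nat), lt zero x ->
          exists y, lt zero y /\ mpow mul y n = x))
  /\
  ((forall a b, a \in F -> b \in F -> c (a + b) = add (c a) (c b)) /\
      (forall a b, a \in F -> b \in F -> c (a * b) = mul (c a) (c b)) /\
      (forall a, a \in F -> 0 < a -> lt zero (c a)))
  /\
  ((forall a b x, a \in F -> b \in F ->
          mul (c (a + b)) x = add (mul (c a) x) (mul (c b) x)) /\
      (forall a x y, a \in F -> mul (c a) (add x y) = add (mul (c a) x) (mul (c a) y))).

(* Transporting multiplication along h turns h into an isomorphism between
   the new structure and R for the multiplicative part, while addition and
   order are left untouched.  The axioms involving only + and < therefore hold
   in R itself, and those involving only the product are transported from R
   through h; divisibility of the positive cone is the existence of n-th roots
   in a real closed field.  Finally h fixes every constant c_a, so that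
   c_a (x) y = h^-1 (a h y) = a y, which makes the mixed axioms (4a), (4b)
   ordinary distributivity in R. *)
From HB Require Import structures.
From mathcomp Require Import all_boot all_order all_algebra.
From mathcomp Require Import reals.
Set Implicit Arguments. Unset Strict Implicit. Unset Printing Implicit Defensive.
Import Order.TTheory GRing.Theory Num.Theory.
Local Open Scope ring_scope.

Lemma rcf_exists_root_gt0 (R : rcfType) (x : R) (n : nat) : 0 < x ->
  exists2 y : R, 0 < y & y ^+ n.+1 = x.
Proof.
move=> x_gt0; have x1_ge0 : 0 <= 1 + x by rewrite addr_ge0 // ltW.
have sign_change : ('X ^+ n.+1 - x%:P).[0] <= 0 <= ('X ^+ n.+1 - x%:P).[1 + x].
  rewrite !hornerE expr0n /= sub0r oppr_le0 (ltW x_gt0) subr_ge0.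
  apply: le_trans (_ : 1 + x <= _); first by rewrite lerDr.
  by rewrite -[leLHS]expr1 ler_eXn2l // ltrDl.
have [y /andP[y_ge0 _]] := poly_ivt x1_ge0 sign_change.
rewrite rootE !hornerE subr_eq0 => /eqP yn_x.
exists y => //; rewrite lt_def y_ge0 andbT.
by apply: contraTneq x_gt0 => y0; rewrite -yn_x y0 expr0n ltxx.
Qed.

Section PullbackMul.

Variables (R : realFieldType) (h hinv : R -> R).
Hypotheses (hK : cancel h hinv) (hinvK : cancel hinv h).
Hypotheses (h_lt : {homo h : x y / x < y}) (h0 : h 0 = 0) (h1 : h 1 = 1).

Definition pullback_mul (x y : R) : R := hinv (h x * h y).

Lemma h_mono : {mono h : x y / x < y}.
Proof. exact: leW_mono (le_mono h_lt). Qed.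

Lemma hinv_mono : {mono hinv : x y / x < y}.
Proof. by move=> x y; rewrite -h_mono !hinvK. Qed.

Lemma h_gt0 x : (0 < h x) = (0 < x).
Proof. by rewrite -{1}h0 h_mono. Qed.

Lemma hinv_gt0 x : (0 < hinv x) = (0 < x).
Proof. by rewrite -h_gt0 hinvK. Qed.

Lemma pullback_mul_gt0 x y : 0 < x -> 0 < y -> 0 < pullback_mul x y.
Proof. by move=> x_gt0 y_gt0; rewrite hinv_gt0 mulr_gt0 ?h_gt0. Qed.

Lemma pullback_mulA x y z :
  pullback_mul x (pullback_mul y z) = pullback_mul (pullback_mul x y) z.
Proof. by rewrite /pullback_mul !hinvK mulrA. Qed.

Lemma pullback_mulC x y : pullback_mul x y = pullback_mul y x.
Proof. by rewrite /pullback_mul mulrC. Qed.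

Lemma pullback_mul1 x : pullback_mul 1 x = x.
Proof. by rewrite /pullback_mul h1 mul1r hK. Qed.

Lemma pullback_mul_inv x : 0 < x ->
  exists y, 0 < y /\ pullback_mul x y = 1.
Proof.
move=> x_gt0; exists (hinv (h x)^-1).
rewrite hinv_gt0 invr_gt0 h_gt0 /pullback_mul hinvK mulfV ?gt_eqF ?h_gt0 //.
by rewrite -h1 hK.
Qed.

Lemma pullback_mul_ltr2r x y z : 0 < z -> x < y ->
  pullback_mul x z < pullback_mul y z.
Proof. by move=> z_gt0 xy; rewrite hinv_mono ltr_pM2r ?h_gt0 ?h_mono. Qed.

Lemma mpow_pullback_mul y n : mpow pullback_mul (hinv y) n = hinv (y ^+ n.+1).
Proof.
elim: n => [|n IHn] /=; first by rewrite expr1.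
by rewrite IHn /pullback_mul !hinvK -exprSr.
Qed.

End PullbackMul.

Lemma pullback_mul_root (R : rcfType) (h hinv : R -> R) (x : R) (n : nat) :
  cancel h hinv -> cancel hinv h -> {homo h : u v / u < v} -> h 0 = 0 -> 0 < x ->
  exists y, 0 < y /\ mpow (pullback_mul h hinv) y n = x.
Proof.
move=> hK hinvK h_lt h0 x_gt0.
have hx_gt0 : 0 < h x by rewrite (h_gt0 h_lt h0).
have [y y_gt0 yn_hx] := rcf_exists_root_gt0 n hx_gt0.
exists (hinv y); rewrite (hinv_gt0 hinvK h_lt h0); split=> //.
by rewrite mpow_pullback_mul // yn_hx hK.
Qed.

Section Embedding.

Variables (Re : realType) (F : {pred Re}) (R : rcfType) (iota : Re -> R).
Hypothesis F_subfield : is_subfield F.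
Hypothesis iota_emb : order_field_embedding F iota.

Lemma subfield_addr_closed : {in F &, forall a b, a + b \in F}.
Proof.
have [F0 _ FB _ _] := F_subfield; move=> a b Fa Fb.
by have := FB a (0 - b) Fa (FB 0 b F0 Fb); rewrite sub0r opprK.
Qed.

Lemma iota0 : iota 0 = 0.
Proof.
have [F0 _ _ _ _] := F_subfield; have [_ iotaD _ _] := iota_emb.
by apply: (addrI (iota 0)); rewrite -iotaD // !addr0.
Qed.

Lemma iota_gt0 a : a \in F -> 0 < a -> 0 < iota a.
Proof.
have [F0 _ _ _ _] := F_subfield; have [_ _ _ iota_lt] := iota_emb.
by move=> Fa; rewrite -iota0 -iota_lt.
Qed.

Variables (h hinv : R -> R).
Hypotheses (h_F : F_bijection F iota h) (hK : cancel h hinv).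

Lemma F_bijection_iota a : a \in F -> h (iota a) = iota a.
Proof. by have [_ _ _ h1 hF] := h_F => Fa; rewrite -[iota a]mulr1 hF // h1. Qed.

Lemma pullback_mul_iotal a x : a \in F -> pullback_mul h hinv (iota a) x = iota a * x.
Proof.
have [_ _ _ _ hF] := h_F => Fa.
by rewrite /pullback_mul F_bijection_iota // -hF // hK.
Qed.

End Embedding.

Theorem theorem9p2 (Re : realType) (F : {pred Re}) (R : rcfType)
    (iota : Re -> R) (h hinv : R -> R) :
  is_subfield F -> countable_pred F ->
  order_field_embedding F iota ->
  F_bijection F iota h ->
  cancel h hinv -> cancel hinv h ->
  models_TFstar F 0 1 +%R (fun x y => hinv (h x * h y))
    (fun x y => x < y) iota.
Proof.
move=> F_sub _ iota_emb h_F hK hinvK.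
change (models_TFstar F 0 1 +%R (pullback_mul h hinv) (fun x y => x < y) iota).
have [_ h_lt h0 h1 _] := h_F; have [_ iotaD iotaM _] := iota_emb.
have FD := subfield_addr_closed F_sub.
have iotaC := pullback_mul_iotal h_F hK.
repeat apply: conj.
- exact: addrA.
- exact: addrC.
- exact: add0r.
- by move=> x; exists (- x); rewrite subrr.
- by move=> x; rewrite ltxx.
- by move=> x y z; apply: lt_trans.
- by move=> x y; case: ltgtP; auto.
- by move=> x y z; rewrite ltrD2r.
- exact: (pullback_mul_gt0 hinvK h_lt h0).
- by move=> x y z _ _ _; exact: (pullback_mulA hinvK).
- by move=> x y _ _; exact: (pullback_mulC h hinv).
- exact: ltr01.
- by move=> x _; exact: (pullback_mul1 hK h1).
- exact: (pullback_mul_inv hK hinvK h_lt h0 h1).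
- by move=> x y z _ _; exact: (pullback_mul_ltr2r hinvK h_lt h0).
- by move=> x n; exact: (pullback_mul_root n hK hinvK h_lt h0).
- by move=> a b Fa Fb; rewrite iotaD.
- by move=> a b Fa Fb; rewrite iotaC // iotaM.
- exact: (iota_gt0 F_sub iota_emb).
- by move=> a b x Fa Fb; rewrite !iotaC ?FD // iotaD // mulrDl.
- by move=> a x y Fa; rewrite !iotaC // mulrDr.
Qed.
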